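(* Let $T$ be a string of length $n$ over an alphabet $\Sigma$, and let $1\le i\le j<n$. Let $d=j-i+1$ and let $\sigma'$ be the number of distinct characters occurring in $T[i..j]$. Then $|\mathsf{MAW}(T[i..j+1])\setminus\mathsf{MAW}(T[i..j])|\le\sigma'+d$.
   Context: For a string $S$ over alphabet $\Sigma$, a string $w\in\Sigma^*$ is a minimal absent word (MAW) of $S$ if $w$ does not occur in $S$ but every proper substring of $w$ (including the empty string) occurs in $S$; $\mathsf{MAW}(S)$ is the set of all MAWs of $S$. $T[a..b]$ denotes the substring of $T$ from position $a$ to $b$. *)

From mathcomp Require Import all_boot.
Set Implicit Arguments. Unset Strict Implicit. Unset Printing Implicit Defensive.

Section MAW.
Variable Sigma : eqType.

(* w occurs in S (as a contiguous substring); the empty string occurs everywhere. *)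
Definition occurs (w S : seq Sigma) : bool := infix w S.

Definition is_MAW (S w : seq Sigma) : Prop :=
  ~~ occurs w S /\ (forall u : seq Sigma, infix u w -> u <> w -> occurs u S).

(* T[a..b], 1-indexed, inclusive *)
Definition substr (T : seq Sigma) (a b : nat) : seq Sigma :=
  take (b.+1 - a) (drop a.-1 T).

Definition num_distinct (S : seq Sigma) : nat := size (undup S).
End MAW.

From mathcomp Require Import all_boot zify.
Set Implicit Arguments. Unset Strict Implicit. Unset Printing Implicit Defensive.

(* A word w that is a MAW of S c but not of S has length at least 2, say w = a x b.
   Both a x and x b occur in S c, but not both occur in S (else w would be a MAW
   of S).  If x b occurs in S, then a x is a suffix of S c and we charge w to its
   last letter b, a letter of S.  Otherwise x b is a suffix of S c, so b = c, and
   we charge w to the end e of the first occurrence of a x in S c; here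
   1 <= e <= |S| + 1 and e <> |S|, since e = |S| would make w a suffix of S c.
   Both charges are injective: if a1 x1 and a2 x2 are suffixes of a common string,
   then one of a1 x1 b, a2 x2 b is an infix of the other, and a MAW is never a
   proper infix of another MAW. *)

Section Words.
Variable Sigma : eqType.
Implicit Types (S s u x : seq Sigma) (a b : Sigma).

Lemma suffix_cons_inv u a s : suffix u (a :: s) -> u = a :: s \/ suffix u s.
Proof.
case/suffixP=> [[|y t] /= def_s]; first by left.
by case: def_s => _ ->; right; apply: suffix_suffix.
Qed.

Lemma proper_infix_cons_rcons u a x b :
  infix u (a :: rcons x b) -> u <> a :: rcons x b ->
  infix u (a :: x) || infix u (rcons x b).
Proof.
rewrite -rcons_cons infix_rconsl rcons_cons => /orP[/suffix_cons_inv[->//|]|->//].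
by move/suffixW ->; rewrite orbT.
Qed.

Lemma prefix_total s u1 u2 :
  prefix u1 s -> prefix u2 s -> prefix u1 u2 || prefix u2 u1.
Proof.
wlog le12 : u1 u2 / size u1 <= size u2.
  move=> W; case: (leqP (size u1) (size u2)) => [|/ltnW] le p1 p2; first exact: W.
  by rewrite orbC; apply: W.
rewrite !prefixE => /eqP def_u1 /eqP def_u2.
by rewrite -{1}def_u2 take_takel // def_u1 eqxx.
Qed.

Lemma suffix_total s u1 u2 :
  suffix u1 s -> suffix u2 s -> suffix u1 u2 || suffix u2 u1.
Proof. by rewrite -!prefix_rev; apply: prefix_total. Qed.

Definition infix_end u s := infix_index u s + size u.

Lemma infix_end_take u s :
  infix u s -> take (infix_end u s) s = take (infix_index u s) s ++ u.
Proof. by rewrite infixE /infix_end takeD => /eqP ->. Qed.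

Lemma infix_end_le u s : infix u s -> infix_end u s <= size s.
Proof.
move=> us; have := f_equal size (infix_end_take us).
by rewrite /infix_end size_cat size_take size_takel ?infixTindex //; case: ltnP; lia.
Qed.

Lemma suffix_take_infix_end u s : infix u s -> suffix u (take (infix_end u s) s).
Proof. by move/infix_end_take ->; apply: suffix_suffix. Qed.

Lemma is_MAW_letter S a : is_MAW S [:: a] <-> a \notin S.
Proof.
rewrite /is_MAW /occurs infix1s; split=> [[]//|aS]; split=> // u.
by rewrite infixs1 => /orP[/eqP -> _|/eqP //]; apply: infix0s.
Qed.

Lemma is_MAW_cons_rcons S a x b :
  is_MAW S (a :: rcons x b) <->
  [/\ ~~ occurs (a :: rcons x b) S, occurs (a :: x) S & occurs (rcons x b) S].
Proof.
have size_neq u : size u < size (a :: rcons x b) -> u <> a :: rcons x b.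
  by move=> lt_u def_u; rewrite def_u ltnn in lt_u.
split=> [[absent proper]|[absent ax xb]].
  split=> //; apply: proper.
  - by rewrite -rcons_cons infix_rcons.
  - by apply: size_neq; rewrite /= size_rcons.
  - exact: infix_cons.
  - by apply: size_neq; rewrite /= size_rcons.
by split=> // u /proper_infix_cons_rcons u_proper /u_proper /orP[] /infix_trans; apply.
Qed.

Lemma MAW_infix_eq S w1 w2 : is_MAW S w1 -> is_MAW S w2 -> infix w1 w2 -> w1 = w2.
Proof.
move=> [absent1 _] [_ proper2] w12; apply/eqP/negPn/negP => /eqP neq12.
by move: absent1; rewrite (proper2 _ w12 neq12).
Qed.

Lemma MAW_eq_of_suffix S s a1 a2 x1 x2 b :
  is_MAW S (a1 :: rcons x1 b) -> is_MAW S (a2 :: rcons x2 b) ->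
  suffix (a1 :: x1) s -> suffix (a2 :: x2) s ->
  a1 :: rcons x1 b = a2 :: rcons x2 b.
Proof.
move=> maw1 maw2 suf1 suf2; have /orP[suf12|suf21] := suffix_total suf1 suf2.
  apply: MAW_infix_eq maw1 maw2 _; apply: suffixW.
  by rewrite -!rcons_cons suffix_rcons eqxx.
symmetry; apply: MAW_infix_eq maw2 maw1 _; apply: suffixW.
by rewrite -!rcons_cons suffix_rcons eqxx.
Qed.

End Words.

Section NewMAW.
Variable Sigma : eqType.
Variables (S : seq Sigma) (c : Sigma).
Implicit Types (w x : seq Sigma) (a b : Sigma).
Local Notation S' := (rcons S c).

Definition new_MAW w := is_MAW S' w /\ ~ is_MAW S w.

Lemma new_MAW_shape w : new_MAW w -> exists a x b, w = a :: rcons x b.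
Proof.
case: w => [[[]]|a w]; first by rewrite /occurs infix0s.
case/lastP: w => [[maw' []]|x b _]; last by exists a, x, b.
apply/is_MAW_letter; move/is_MAW_letter: maw'.
by apply: contra => aS; rewrite mem_rcons in_cons aS orbT.
Qed.

Lemma new_MAW_factors a x b : new_MAW (a :: rcons x b) ->
  [/\ occurs (a :: x) S', occurs (rcons x b) S'
    & ~~ (occurs (a :: x) S && occurs (rcons x b) S)].
Proof.
case=> /is_MAW_cons_rcons[absent' ax' xb'] not_maw; split=> //.
apply/negP => /andP[axS xbS]; apply: not_maw; apply/is_MAW_cons_rcons; split=> //.
by apply: contra absent' => /infix_trans; apply; apply: infix_rcons.
Qed.

Lemma new_MAW_right_occurs a x b : new_MAW (a :: rcons x b) -> occurs (rcons x b) S ->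
  b \in S /\ suffix (a :: x) S'.
Proof.
move=> new xbS; have [ax' _ not_both] := new_MAW_factors new.
split; first by apply: (mem_infix xbS); rewrite mem_rcons mem_head.
move: not_both ax'; rewrite xbS andbT /occurs infix_rconsl => /negbTE ->.
by rewrite orbF.
Qed.

Lemma new_MAW_right_absent a x b : new_MAW (a :: rcons x b) -> ~~ occurs (rcons x b) S ->
  b = c /\
  [/\ infix_end (a :: x) S' <= (size S).+1, infix_end (a :: x) S' != size S
    & suffix (a :: x) (take (infix_end (a :: x) S') S')].
Proof.
move=> new xbS; have [ax' xb' _] := new_MAW_factors new.
have eq_bc : b = c.
  move: xb' xbS; rewrite /occurs infix_rconsl => /orP[|->//].
  by rewrite suffix_rcons => /andP[/eqP].
subst b; split=> //; split; last exact: suffix_take_infix_end.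
  by rewrite -(size_rcons S c); apply: infix_end_le.
apply/eqP => end_S; have [[absent' _] _] := new.
have := suffix_take_infix_end ax'; rewrite end_S -cats1 take_size_cat // => axS.
by move: absent'; rewrite /occurs -rcons_cons infix_rconsl suffix_rcons eqxx axS.
Qed.

Lemma count_new_MAW_right_occurs ws : uniq ws ->
  {in ws, forall w, new_MAW w /\ occurs (behead w) S} -> size ws <= size (undup S).
Proof.
move=> uniq_ws occ.
have inj : {in ws &, injective (last c)}.
  move=> w1 w2 /occ[new1 +] /occ[new2 +].
  have [a1 [x1 [b1 def_w1]]] := new_MAW_shape new1; subst w1.
  have [a2 [x2 [b2 def_w2]]] := new_MAW_shape new2; subst w2.
  rewrite /= !last_rcons => occ1 occ2 eq_b; subst b2.
  have [_ suf1] := new_MAW_right_occurs new1 occ1.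
  have [_ suf2] := new_MAW_right_occurs new2 occ2.
  exact: MAW_eq_of_suffix new1.1 new2.1 suf1 suf2.
rewrite -(size_map (last c)); apply: uniq_leq_size; first by rewrite map_inj_in_uniq.
move=> _ /mapP[w /occ[new +] ->]; have [a [x [b def_w]]] := new_MAW_shape new; subst w.
by rewrite /= last_rcons mem_undup => /(new_MAW_right_occurs new) [].
Qed.

Lemma count_new_MAW_right_absent ws : 0 < size S -> uniq ws ->
  {in ws, forall w, new_MAW w /\ ~~ occurs (behead w) S} -> size ws <= size S.
Proof.
move=> S_gt0 uniq_ws absent.
pose init_end w := infix_end (belast (head c w) (behead w)) S'.
have inj : {in ws &, injective init_end}.
  move=> w1 w2 /absent[new1 +] /absent[new2 +].
  have [a1 [x1 [b1 def_w1]]] := new_MAW_shape new1; subst w1.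
  have [a2 [x2 [b2 def_w2]]] := new_MAW_shape new2; subst w2.
  rewrite /init_end /= !belast_rcons => absent1 absent2 eq_end.
  have [eq_b1 [_ _ suf1]] := new_MAW_right_absent new1 absent1.
  have [eq_b2 [_ _ suf2]] := new_MAW_right_absent new2 absent2.
  subst b1 b2; rewrite eq_end in suf1.
  exact: MAW_eq_of_suffix new1.1 new2.1 suf1 suf2.
pose ends := rem (size S) (iota 1 (size S).+1).
have size_ends : size ends = size S.
  by rewrite size_rem ?size_iota // mem_iota; lia.
rewrite -size_ends -(size_map init_end); apply: uniq_leq_size.
  by rewrite map_inj_in_uniq.
move=> _ /mapP[w /absent[new +] ->]; have [a [x [b def_w]]] := new_MAW_shape new; subst w.
rewrite /init_end /= belast_rcons => /(new_MAW_right_absent new) [_ [le_end ne_end _]].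
rewrite mem_rem_uniq ?iota_uniq // inE ne_end mem_iota.
by move: le_end; rewrite /infix_end /=; lia.
Qed.

Lemma count_new_MAW ws : 0 < size S -> uniq ws -> {in ws, forall w, new_MAW w} ->
  size ws <= size (undup S) + size S.
Proof.
move=> S_gt0 uniq_ws new; pose right_occurs w := occurs (behead w) S.
rewrite -(count_predC right_occurs) -!size_filter leq_add //.
  apply: count_new_MAW_right_occurs; first exact: filter_uniq.
  by move=> w; rewrite mem_filter => /andP[? /new].
apply: count_new_MAW_right_absent => //; first exact: filter_uniq.
by move=> w; rewrite mem_filter => /andP[? /new].
Qed.

End NewMAW.

Section Substrings.
Variable Sigma : eqType.
Implicit Type T : seq Sigma.

Lemma size_substr T i j : 0 < i <= j -> j <= size T -> size (substr T i j) = j - i + 1.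
Proof.
by move=> /andP[i_gt0 le_ij] le_jT; rewrite size_take size_drop; case: ltnP; lia.
Qed.

Lemma substrS T i j x0 : 0 < i <= j.+1 -> j < size T ->
  substr T i j.+1 = rcons (substr T i j) (nth x0 T j).
Proof.
move=> /andP[i_gt0 le_ij] lt_jT.
rewrite /substr (_ : j.+2 - i = (j.+1 - i).+1); last by lia.
rewrite (take_nth x0) ?size_drop ?nth_drop; last by lia.
by congr (rcons _ (nth _ _ _)); lia.
Qed.

End Substrings.

Theorem lemma11 (Sigma : eqType) (T : seq Sigma) (i j : nat) :
  1 <= i -> i <= j -> j < size T ->
  forall ws : seq (seq Sigma), uniq ws ->
  (forall w, w \in ws ->
     is_MAW (substr T i j.+1) w /\ ~ is_MAW (substr T i j) w) ->
  size ws <= num_distinct (substr T i j) + (j - i + 1).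
Proof.
move=> i_gt0 le_ij lt_jT ws uniq_ws new.
have x0 : Sigma by case: (T) lt_jT => [|t].
have size_S : size (substr T i j) = j - i + 1.
  by apply: size_substr; [rewrite i_gt0 | apply: ltnW].
rewrite /num_distinct -size_S; apply: (count_new_MAW (c := nth x0 T j)) => //.
  by rewrite size_S addn1.
by move=> w /new; rewrite (substrS x0) ?i_gt0 ?(leqW le_ij).
Qed.
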